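(* Let $X(t)$ satisfy (A1)–(A2) and $\mathbf v:\mathcal S_n\to\mathbb R^d$. Let $\mathbf m^{\mathbf v}=(\min_jv_1(j),\dots,\min_jv_d(j))$ and $\mathbf M^{\mathbf v}=(\max_jv_1(j),\dots,\max_jv_d(j))$. Then for all $i,k\in\mathcal S_n$, all $\varepsilon>0$, all $t\ge0$ and all $\mathbf x\in\mathbb R^d$, \[ \begin{aligned} \mathbb P\{X(t)=i,X(t+\varepsilon)=k\}\,F^{\mathbf v}_i(t,\mathbf x-\varepsilon\mathbf M^{\mathbf v}) &\le\mathbb P\{X(t)=i,X(t+\varepsilon)=k,\mathbf L^{\mathbf v}(t+\varepsilon)\le\mathbf x\}\,\mathbb P\{X(t)=i\}\\ &\le\mathbb P\{X(t)=i,X(t+\varepsilon)=k\}\,F^{\mathbf v}_i(t,\mathbf x-\varepsilon\mathbf m^{\mathbf v}), \end{aligned} \] where comparisons of vectors are componentwise.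
   Context: (A1): $\{X(t)\}_{t\ge0}$ is a regular jump Markov process on $(\Omega,\mathcal F,\mathbb P)$ with values in $\mathcal S_n=\{1,\dots,n\}$, right-continuous trajectories, and transition rates $q_{ij}(t)$: $\mathbb P\{X(t+h)=j\mid X(t)=i\}=q_{ij}(t)h+o(h)$ for $j\ne i$. (A2): $Q(t)=(q_{ij}(t))$ is conservative ($q_i(t):=-q_{ii}(t)=\sum_{j\ne i}q_{ij}(t)$), continuous and bounded on $[0,\infty)$, and for each $i$ either $q_i\equiv0$ or $q_i>0$ everywhere with $\int_0^\infty q_i=\infty$. $\mathbf L^{\mathbf v}(t)=\int_0^t\mathbf v(X(s))\,ds$ and $F^{\mathbf v}_k(t,\mathbf x)=\mathbb P\{X(t)=k,\ \mathbf L^{\mathbf v}(t)\le\mathbf x\}$ (componentwise). *)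

From HB Require Import structures.
From mathcomp Require Import all_boot all_order all_algebra.
From mathcomp Require Import all_classical all_reals all_analysis.
Set Implicit Arguments. Unset Strict Implicit. Unset Printing Implicit Defensive.
Import Order.TTheory GRing.Theory Num.Theory numFieldNormedType.Exports.
Local Open Scope classical_set_scope.
Local Open Scope ring_scope.

(* State space S_n = {1,...,n} is rendered as 'I_N (N = n, N >= 1 written N.+1
   in the theorem).  Time is R; only t >= 0 is relevant. *)

Definition occup (R : realType) (T : Type) (N d : nat)
  (v : 'I_N -> 'I_d -> R) (X : R -> T -> 'I_N) (t : R) (w : T) (l : 'I_d)
  : \bar R :=
  (\int[lebesgue_measure]_(s in `[0%R, t]) (v (X s w) l)%:E)%E.

Definition Lle (R : realType) (T : Type) (N d : nat)
  (v : 'I_N -> 'I_d -> R) (X : R -> T -> 'I_N) (t : R) (w : T)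
  (x : 'I_d -> R) : Prop :=
  forall l : 'I_d, (occup v X t w l <= (x l)%:E)%E.

Definition Fv (R : realType) (d0 : measure_display) (T : measurableType d0)
  (P : probability T R) (N d : nat) (v : 'I_N -> 'I_d -> R)
  (X : R -> T -> 'I_N) (k : 'I_N) (t : R) (x : 'I_d -> R) : \bar R :=
  P [set w | X t w = k /\ Lle v X t w x].

Definition mv (R : realType) (N d : nat) (v : 'I_N.+1 -> 'I_d -> R)
  (l : 'I_d) : R := \big[Order.min/v ord0 l]_(j < N.+1) v j l.
Definition Mv (R : realType) (N d : nat) (v : 'I_N.+1 -> 'I_d -> R)
  (l : 'I_d) : R := \big[Order.max/v ord0 l]_(j < N.+1) v j l.

Definition nat_filt (R : realType) (T : Type) (N : nat)
  (X : R -> T -> 'I_N) (s : R) : set (set T) :=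
  <<s [set A | exists (r : R) (j : 'I_N), 0 <= r <= s /\ A = [set w | X r w = j]] >>.

(* Trajectories are right-continuous, piecewise constant, with finitely many
   jumps on every bounded time interval (regular jump process): for every w and
   horizon Tm there are times 0 = tau_0 < tau_1 < ... < tau_m with tau_m > Tm
   such that X(., w) is constant on each [tau_j, tau_{j+1}). *)
Definition regular_jump_paths (R : realType) (T : Type) (N : nat)
  (X : R -> T -> 'I_N) : Prop :=
  forall (w : T) (Tm : R), exists taus : seq R,
    let s := 0 :: taus in
    [/\ sorted <%R s, Tm < last 0 s &
        forall j : nat, (j.+1 < size s)%N ->
          forall u : R, nth 0 s j <= u < nth 0 s j.+1 ->
            X u w = X (nth 0 s j) w].

Definition A1 (R : realType) (d0 : measure_display) (T : measurableType d0)
  (P : probability T R) (N : nat) (X : R -> T -> 'I_N)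
  (q : R -> 'I_N -> 'I_N -> R) : Prop :=
  [/\
      (forall t : R, 0 <= t -> forall j : 'I_N, measurable [set w | X t w = j]),
      regular_jump_paths X,
      (forall (s u : R), 0 <= s -> s <= u -> forall (i j : 'I_N) (A : set T),
          nat_filt X s A ->
          (P (A `&` [set w | X s w = i /\ X u w = j]) * P [set w | X s w = i]
           = P (A `&` [set w | X s w = i]) * P [set w | X s w = i /\ X u w = j])%E) &
      (* transition rates: P{X(t)=i, X(t+h)=j} = P{X(t)=i} (q_ij(t) h + o(h)),
         i.e. P{X(t+h)=j | X(t)=i} = q_ij(t) h + o(h), h -> 0+ *)
      (forall t : R, 0 <= t -> forall i j : 'I_N, i != j ->
          (fun h : R => (fine (P [set w | X t w = i /\ X (t + h) w = j])
                         - fine (P [set w | X t w = i]) * (q t i j * h)) / h)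
          @ 0^'+ --> (0 : R))].

Definition A2 (R : realType) (N : nat) (q : R -> 'I_N -> 'I_N -> R) : Prop :=
  [/\
      (forall t : R, 0 <= t -> forall i j : 'I_N, i != j -> 0 <= q t i j),
      (forall t : R, 0 <= t -> forall i : 'I_N,
          - q t i i = \sum_(j < N | j != i) q t i j),
      (forall i j : 'I_N, {within `[0, +oo[, continuous (fun t => q t i j)}),
      (exists B : R, forall t : R, 0 <= t -> forall i j : 'I_N, `|q t i j| <= B) &
      (forall i : 'I_N,
          (forall t : R, 0 <= t -> - q t i i = 0) \/
          ((forall t : R, 0 <= t -> 0 < - q t i i) /\
           (\int[lebesgue_measure]_(t in `[0%R, +oo[%classic) (- q t i i)%:E)%E = +oo%E))].

(* Conditionally on X(t) = i, the Markov property at time t factorises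
     P{X(t) = i, L(t) <= y, X(t + eps) = k} P{X(t) = i}
       = P{X(t) = i, L(t) <= y} P{X(t) = i, X(t + eps) = k}.
   This needs {L(t) <= y} to lie in the past sigma(X(r), 0 <= r <= t): the paths
   are right-continuous step functions, so L(t) is the pointwise limit of
   right-endpoint Riemann sums, each a function of finitely many X(r), r <= t.
   The increment L(t + eps) - L(t) lies componentwise between eps m^v and
   eps M^v, hence {L(t) <= x - eps M^v} is contained in {L(t + eps) <= x}, which
   is contained in {L(t) <= x - eps m^v}, and monotonicity of P gives both
   inequalities. *)

From HB Require Import structures.
From mathcomp Require Import all_boot all_order all_algebra.
From mathcomp Require Import all_classical all_reals all_analysis.
From mathcomp Require Import measurable_realfun lra.
Import Order.TTheory GRing.Theory Num.Theory numFieldNormedType.Exports.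
Set Implicit Arguments. Unset Strict Implicit. Unset Printing Implicit Defensive.
Local Open Scope classical_set_scope.
Local Open Scope ring_scope.

Lemma exists_nth_itv (R : realType) (a s : R) (l : seq R) :
  a <= s -> s < last a l ->
  exists2 j, (j.+1 < size (a :: l))%N & nth 0 (a :: l) j <= s < nth 0 (a :: l) j.+1.
Proof.
elim: l a => [|b l IHl] a /= a_le_s s_lt.
  by move: (le_lt_trans a_le_s s_lt); rewrite ltxx.
have [s_lt_b|b_le_s] := ltP s b; first by exists 0%N; rewrite ?a_le_s.
by have [j j_lt s_in] := IHl b b_le_s s_lt; exists j.+1.
Qed.

Lemma regular_jump_paths_right_const (R : realType) (T : Type) (N : nat)
    (X : R -> T -> 'I_N) (w : T) (s : R) :
  regular_jump_paths X -> 0 <= s ->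
  exists2 r : R, 0 < r & forall u, s <= u < s + r -> X u w = X s w.
Proof.
move=> Xreg s_ge0; have [taus [_ s_lt_last Xconst]] := Xreg w s.
have [[|j] j_lt /andP[tau_le_s s_lt_tau]] := exists_nth_itv s_ge0 s_lt_last.
  by move: (le_lt_trans tau_le_s s_lt_tau); rewrite ltxx.
exists (nth 0 (0 :: taus) j.+1 - s); first by rewrite subr_gt0.
move=> u /andP[s_le_u]; rewrite addrC subrK => u_lt_tau.
rewrite (Xconst j j_lt u) ?(le_trans tau_le_s s_le_u) ?u_lt_tau //.
by rewrite (Xconst j j_lt s) // tau_le_s s_lt_tau.
Qed.

Lemma indic_itv_oc (R : realType) (a b s : R) :
  \1_(`]a, b]%classic) s = ((a < s) && (s <= b))%:R :> R.
Proof.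
rewrite indicE; have [s_in|s_notin] := boolP ((a < s) && (s <= b)).
  by rewrite mem_set //= in_itv /= s_in.
by rewrite memNset //= in_itv /=; apply/negP.
Qed.

Lemma sum_indic_cells (R : realType) (h s : R) (K : nat) : 0 <= h ->
  \sum_(j < K) \1_(`](j%:R * h), (j.+1%:R * h)]%classic) s
  = ((0 < s) && (s <= K%:R * h))%:R :> R.
Proof.
move=> h_ge0; elim: K => [|K IHK]; first by rewrite big_ord0 mul0r; case: ltP.
rewrite big_ord_recr /= IHK indic_itv_oc.
have [s_le|lt_s] := leP s (K%:R * h).
  rewrite andbT andFb addr0 (le_trans s_le) ?andbT //.
  by rewrite ler_wpM2r // ler_nat.
by rewrite andbF add0r /= (le_lt_trans _ lt_s) // mulr_ge0.
Qed.

Definition subdiv (R : realType) (t : R) (m j : nat) : R := j%:R * (t / m.+1%:R).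

Lemma subdiv_last (R : realType) (t : R) (m : nat) : subdiv t m m.+1 = t.
Proof. by rewrite /subdiv mulrC divfK // pnatr_eq0. Qed.

Lemma sum_indic_subdiv (R : realType) (t s : R) (m : nat) : 0 <= t ->
  \sum_(j < m.+1) \1_(`]subdiv t m j, subdiv t m j.+1]%classic) s
  = ((0 < s) && (s <= t))%:R :> R.
Proof.
by move=> t_ge0; rewrite sum_indic_cells ?divr_ge0 // -/(subdiv t m m.+1) subdiv_last.
Qed.

Section step_approximation.
Variables (R : realType) (T : Type) (N : nat) (f : 'I_N -> R) (X : R -> T -> 'I_N).

Definition step_approx (t : R) (m : nat) (w : T) (s : R) : R :=
  \sum_(j < m.+1) \1_(`]subdiv t m j, subdiv t m j.+1]%classic) s
                  * f (X (subdiv t m j.+1) w).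

Lemma measurable_step_approx (t : R) (m : nat) (w : T) (D : set R) :
  measurable_fun D (step_approx t m w).
Proof.
apply: measurable_sum => j; apply: measurable_funM; last exact: measurable_cst.
by apply: measurable_indic; exact: measurable_itv.
Qed.

Lemma step_approx_bound (t : R) (m : nat) (w : T) (s : R) : 0 <= t ->
  `|step_approx t m w s| <= \sum_(a < N) `|f a|.
Proof.
move=> t_ge0; apply: (le_trans (ler_norm_sum _ _ _)).
apply: (@le_trans _ _ (\sum_(j < m.+1)
    \1_(`]subdiv t m j, subdiv t m j.+1]%classic) s * \sum_(a < N) `|f a|)).
  apply: ler_sum => j _; rewrite normrM ger0_norm ?indicE //.
  by apply: ler_wpM2l => //; rewrite (bigD1 (X (subdiv t m j.+1) w)) //= lerDl sumr_ge0.
rewrite -mulr_suml sum_indic_subdiv //.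
by case: (_ && _); rewrite ?mul1r ?mul0r ?sumr_ge0.
Qed.

Hypothesis Xreg : regular_jump_paths X.

(* Once the mesh is below the length r of an interval [s, s + r) on which the
   path is constant, the cell containing s has its right endpoint in it. *)
Lemma step_approx_near (t : R) (w : T) (s : R) : 0 < s <= t ->
  \forall m \near \oo, step_approx t m w s = f (X s w).
Proof.
move=> /andP[s_gt0 s_le_t].
have [r r_gt0 Xconst] := regular_jump_paths_right_const w Xreg (ltW s_gt0).
have t_gt0 : 0 < t by exact: lt_le_trans s_le_t.
exists (Num.bound (t / r)) => // m /= bound_le_m.
have mesh_gt0 : 0 < t / m.+1%:R by rewrite divr_gt0.
have mesh_lt_r : t / m.+1%:R < r.
  rewrite ltr_pdivrMr // mulrC -ltr_pdivrMr //.
  apply: (lt_le_trans (archi_boundP _)); first by rewrite divr_ge0 // ltW.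
  by rewrite ler_nat; apply: (leq_trans bound_le_m).
transitivity (\sum_(j < m.+1)
    \1_(`]subdiv t m j, subdiv t m j.+1]%classic) s * f (X s w)).
  apply: eq_bigr => j _; rewrite indic_itv_oc.
  case: andP => [[lt_s s_le]|_]; last by rewrite !mul0r.
  have subdiv_succ : subdiv t m j.+1 = subdiv t m j + t / m.+1%:R.
    by rewrite /subdiv -natr1 mulrDl mul1r.
  by rewrite Xconst // s_le subdiv_succ ltrD.
rewrite -mulr_suml sum_indic_subdiv; last exact: ltW.
by rewrite s_gt0 s_le_t mul1r.
Qed.

Lemma measurable_path (t : R) (w : T) :
  measurable_fun `]0, t]%classic (fun s => f (X s w)).
Proof.
apply: (measurable_fun_cvg (h := fun m => step_approx t m w)).
  by move=> m; exact: measurable_step_approx.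
by move=> s; rewrite /= in_itv /= => s_in; apply: cvg_near_cst; exact: step_approx_near.
Qed.

Lemma step_approx_integral_cvg (t : R) (w : T) : 0 <= t ->
  (fun m => \int[lebesgue_measure]_(s in `]0%R, t]) (step_approx t m w s)%:E)%E
  @ \oo --> (\int[lebesgue_measure]_(s in `[0%R, t]) (f (X s w))%:E)%E.
Proof.
move=> t_ge0; rewrite -integral_itv_obnd_cbnd; last first.
  by apply/measurable_EFinP; exact: measurable_path.
apply: (@dominated_cvg _ _ _ lebesgue_measure _ (measurable_itv _) _ _
   (fun _ => (\sum_(a < N) `|f a|)%:E)) => //.
- by move=> m; apply/measurable_EFinP; exact: measurable_step_approx.
- move=> s; rewrite /= in_itv /= => s_in; apply: cvg_near_cst.
  by apply: filterS (step_approx_near w s_in) => m ->.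
- apply: (measurable_bounded_integrable (f := cst (\sum_(a < N) `|f a|))).
  + exact: measurable_itv.
  + suff : (lebesgue_measure (`]0%R, t]%classic : set R) < +oo)%E by [].
    by rewrite lebesgue_measure_itv /=; case: ifP => _; rewrite ?ltry.
  + exact: measurable_cst.
  + exact: bounded_cst.
- by move=> m s _; rewrite /= lee_fin step_approx_bound.
Qed.

End step_approximation.

Lemma measurable_fun_fin_factor (d d' : measure_display) (T : measurableType d)
    (U : measurableType d') (K : finType) (phi : T -> K) (F : K -> U) :
  (forall a, measurable [set w | phi w = a]) -> measurable_fun setT (F \o phi).
Proof.
move=> mphi _ Y _; rewrite setTI.
have -> : (F \o phi) @^-1` Y = \bigcup_(a in [set a | Y (F a)]) [set w | phi w = a].
  apply/seteqP; split => [w /= Yw|w [a /= Ya phi_a]]; first by exists (phi w).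
  by rewrite /= phi_a.
by apply: fin_bigcup_measurable; [exact: finite_finset | move=> a _; exact: mphi].
Qed.

Definition nat_gen (R : realType) (T : Type) (N : nat) (X : R -> T -> 'I_N) (s : R)
    : set (set T) :=
  [set A | exists (r : R) (j : 'I_N), 0 <= r <= s /\ A = [set w | X r w = j]].

Section natural_filtration.
Variables (R : realType) (T : pointedType) (N : nat) (X : R -> T -> 'I_N).
Local Notation past t := (g_sigma_algebraType (nat_gen X t)).

Lemma nat_filt_state (t : R) (j : 'I_N) : 0 <= t -> nat_filt X t [set w | X t w = j].
Proof. by move=> t_ge0; apply: sub_gen_smallest; exists t, j; rewrite t_ge0 lexx. Qed.

(* The Riemann sum only reads the path at the finitely many points of the
   subdivision, all in [0, t]. *)
Lemma measurable_step_approx_integral (f : 'I_N -> R) (t : R) (m : nat) : 0 <= t ->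
  measurable_fun (setT : set (past t))
    (fun w => \int[lebesgue_measure]_(s in `]0%R, t]) (step_approx f X t m w s)%:E)%E.
Proof.
move=> t_ge0.
pose phi (w : T) := [ffun j : 'I_m.+1 => X (subdiv t m j.+1) w].
pose F (a : {ffun 'I_m.+1 -> 'I_N}) := (\int[lebesgue_measure]_(s in `]0%R, t])
   (\sum_(j < m.+1) \1_(`]subdiv t m j, subdiv t m j.+1]%classic) s * f (a j))%:E)%E.
rewrite (_ : (fun w => _) = F \o phi); last first.
  apply/funext => w /=; apply: eq_integral => s _.
  by congr (_%:E); apply: eq_bigr => j _; rewrite ffunE.
apply: (@measurable_fun_fin_factor _ _ (past t)) => a.
have -> : [set w | phi w = a] =
    \bigcap_(j in [set: 'I_m.+1]) [set w | X (subdiv t m j.+1) w = a j].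
  apply/seteqP; split => [w <- j _|w Xw]; first by rewrite /= ffunE.
  by apply/ffunP => j; rewrite ffunE; exact: Xw.
apply: fin_bigcap_measurable => [|j _]; first exact: finite_finset.
apply: sub_gen_smallest; exists (subdiv t m j.+1), (a j); split => //.
rewrite /subdiv mulr_ge0 ?divr_ge0 //= -[leRHS](subdiv_last t m).
by rewrite /subdiv ler_wpM2r ?divr_ge0 // ler_nat.
Qed.

Variables (d : nat) (v : 'I_N -> 'I_d -> R).
Hypothesis Xreg : regular_jump_paths X.

Lemma measurable_occup (t : R) (l : 'I_d) : 0 <= t ->
  measurable_fun (setT : set (past t)) (fun w => occup v X t w l).
Proof.
move=> t_ge0; apply: (@emeasurable_fun_cvg _ (past t) _ setT (fun m w =>
  \int[lebesgue_measure]_(s in `]0%R, t]) (step_approx (v^~ l) X t m w s)%:E)%E).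
  by move=> m; exact: measurable_step_approx_integral.
by move=> w _; exact: step_approx_integral_cvg.
Qed.

Lemma nat_filt_Lle (t : R) (y : 'I_d -> R) : 0 <= t ->
  nat_filt X t [set w | Lle v X t w y].
Proof.
move=> t_ge0.
have -> : [set w | Lle v X t w y] =
    \bigcap_(l in [set: 'I_d])
      ((fun w => occup v X t w l) @^-1` [set` `]-oo, (y l)%:E]%O]).
  apply/seteqP; split => [w Lw l _|w Lw l]; first by rewrite /= in_itv /= Lw.
  by have := Lw l I; rewrite /= in_itv.
apply: (@fin_bigcap_measurable _ (past t)) => [|l _]; first exact: finite_finset.
rewrite -[X in measurable X]setTI.
by apply: measurable_occup => //; exact: emeasurable_itv.
Qed.

Lemma nat_filt_state_Lle (t : R) (j : 'I_N) (y : 'I_d -> R) : 0 <= t ->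
  nat_filt X t ([set w | X t w = j] `&` [set w | Lle v X t w y]).
Proof.
move=> t_ge0; apply: (@measurableI _ (past t)); first exact: nat_filt_state.
exact: nat_filt_Lle.
Qed.

End natural_filtration.

Lemma integral_itv_oc_bounds (R : realType) (f : R -> R) (a b m M : R) :
  a < b -> measurable_fun `]a, b]%classic f -> (forall s, m <= f s <= M) ->
  exists2 J : R, (\int[lebesgue_measure]_(s in `]a, b]) (f s)%:E)%E = J%:E
               & (b - a) * m <= J <= (b - a) * M.
Proof.
move=> a_lt_b mf f_bounds.
have mab : measurable (`]a, b]%classic : set R) by exact: measurable_itv.
have leb_ab : lebesgue_measure (`]a, b]%classic : set R) = (b - a)%:E.
  by rewrite lebesgue_measure_itv /= lte_fin a_lt_b -EFinB.
have leb_ab_fin : (lebesgue_measure (`]a, b]%classic : set R) < +oo)%E.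
  by rewrite leb_ab ltry.
have int_cst (c : R) : lebesgue_measure.-integrable `]a, b]%classic (EFin \o cst c).
  by apply: measurable_bounded_integrable => //; exact: bounded_cst.
have int_f : lebesgue_measure.-integrable `]a, b]%classic (EFin \o f).
  apply: measurable_bounded_integrable => //.
  rewrite /bounded_near; near=> K => s _ /=; have /andP[m_le M_ge] := f_bounds s.
  apply: (@le_trans _ _ (`|m| + `|M|)); last by near: K; exact: nbhs_pinfty_ge.
  have := ler_norm m; have := ler_norm (- m); have := ler_norm M.
  have := ler_norm (- M); have := normr_ge0 m; have := normr_ge0 M.
  rewrite !normrN ler_norml => *; apply/andP; split; lra.
have integral_cst_ab (c : R) :
    (\int[lebesgue_measure]_(s in `]a, b]) (EFin \o cst c) s)%E = ((b - a) * c)%:E.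
  rewrite (_ : EFin \o cst c = cst c%:E) // integral_cst // mulrC EFinM.
  by congr (_ * _)%E; exact: leb_ab.
set J := (\int[lebesgue_measure]_(s in `]a, b]) (f s)%:E)%E.
have J_ge : (((b - a) * m)%:E <= J)%E.
  rewrite -integral_cst_ab; apply: le_integral => // s _.
  by rewrite lee_fin; case/andP: (f_bounds s).
have J_le : (J <= ((b - a) * M)%:E)%E.
  rewrite -integral_cst_ab; apply: le_integral => // s _.
  by rewrite lee_fin; case/andP: (f_bounds s).
have J_fin : J \is a fin_num.
  by rewrite fin_numElt (lt_le_trans _ J_ge) ?ltNyr // (le_lt_trans J_le) ?ltry.
by exists (fine J); rewrite ?fineK // -!lee_fin fineK // J_ge J_le.
Unshelve. all: end_near.
Qed.

Section occupation_increments.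
Variables (R : realType) (T : Type) (N d : nat) (v : 'I_N.+1 -> 'I_d -> R).
Variable X : R -> T -> 'I_N.+1.
Hypothesis Xreg : regular_jump_paths X.

Lemma mv_le (l : 'I_d) (j : 'I_N.+1) : mv v l <= v j l.
Proof. exact: bigmin_le. Qed.

Lemma le_Mv (l : 'I_d) (j : 'I_N.+1) : v j l <= Mv v l.
Proof. exact: le_bigmax. Qed.

Lemma occup_itv_split (w : T) (l : 'I_d) (t u : R) : 0 <= t <= u ->
  occup v X u w l
  = (occup v X t w l + \int[lebesgue_measure]_(s in `]t, u]) (v (X s w) l)%:E)%E.
Proof.
move=> /andP[t_ge0 t_le_u].
have m0u : measurable_fun `[0%R, u]%classic (EFin \o (fun s => v (X s w) l)).
  apply/emeasurable_fun_itv_obnd_cbndP; apply/measurable_EFinP.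
  exact: (@measurable_path _ _ _ (v^~ l) X Xreg).
rewrite /occup (@itv_bndbnd_setU _ _ _ (BRight t)) ?bnd_simp ?(le_trans t_ge0) //.
rewrite integral_setU //; last first.
  apply/disj_setPS => s [] /=; rewrite !in_itv /= => /andP[_ s_le_t] /andP[t_lt_s _].
  by move: (lt_le_trans t_lt_s s_le_t); rewrite ltxx.
by rewrite -itv_bndbnd_setU ?bnd_simp ?(le_trans t_ge0).
Qed.

Lemma occup_increment (w : T) (l : 'I_d) (t eps : R) : 0 <= t -> 0 < eps ->
  exists2 J : R, occup v X (t + eps) w l = (occup v X t w l + J%:E)%E
               & eps * mv v l <= J <= eps * Mv v l.
Proof.
move=> t_ge0 eps_gt0.
have t_lt_teps : t < t + eps by rewrite ltrDl.
have m_teps : measurable_fun `]t, t + eps]%classic (fun s => v (X s w) l).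
  apply: (measurable_funS _ _ (@measurable_path _ _ _ (v^~ l) X Xreg (t + eps) w)).
    exact: measurable_itv.
  by move=> s; rewrite /= !in_itv /= => /andP[t_lt_s ->]; rewrite (le_lt_trans t_ge0).
rewrite (occup_itv_split w l (t := t)); last by rewrite t_ge0 ltW.
have [J -> J_bounds] := integral_itv_oc_bounds t_lt_teps m_teps
  (fun s => introT andP (conj (mv_le l (X s w)) (le_Mv l (X s w)))).
by exists J => //; move: J_bounds; rewrite addrAC subrr add0r.
Qed.

Lemma Lle_shift_Mv (w : T) (t eps : R) (x : 'I_d -> R) : 0 <= t -> 0 < eps ->
  Lle v X t w (fun l => x l - eps * Mv v l) -> Lle v X (t + eps) w x.
Proof.
move=> t_ge0 eps_gt0 Lw l.
have [J -> /andP[_ J_le]] := occup_increment w l t_ge0 eps_gt0.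
by rewrite -(subrK (eps * Mv v l) (x l)) EFinD leeD ?lee_fin.
Qed.

Lemma Lle_shift_mv (w : T) (t eps : R) (x : 'I_d -> R) : 0 <= t -> 0 < eps ->
  Lle v X (t + eps) w x -> Lle v X t w (fun l => x l - eps * mv v l).
Proof.
move=> t_ge0 eps_gt0 Lw l; have := Lw l.
have [J -> /andP[J_ge _]] := occup_increment w l t_ge0 eps_gt0.
rewrite -leeBrDr // -EFinB => /le_trans; apply.
by rewrite lee_fin lerD2l lerN2.
Qed.

End occupation_increments.

Section markov_factorization.
Variables (R : realType) (d0 : measure_display) (T : measurableType d0).
Variables (P : probability T R) (N : nat) (X : R -> T -> 'I_N).
Hypothesis Xmeas : forall t : R, 0 <= t -> forall j : 'I_N, measurable [set w | X t w = j].

Lemma nat_filt_measurable (s : R) : nat_filt X s `<=` measurable.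
Proof.
apply: smallest_sub; first exact: sigma_algebra_measurable.
by move=> _ [r [j [/andP[r_ge0 _] ->]]]; exact: Xmeas.
Qed.

Hypothesis Xmarkov : forall (s u : R), 0 <= s -> s <= u ->
  forall (i j : 'I_N) (A : set T), nat_filt X s A ->
  (P (A `&` [set w | X s w = i /\ X u w = j]) * P [set w | X s w = i]
   = P (A `&` [set w | X s w = i]) * P [set w | X s w = i /\ X u w = j])%E.

Lemma markov_past_state (t u : R) (i k : 'I_N) (A : set T) :
  0 <= t <= u -> nat_filt X t A -> A `<=` [set w | X t w = i] ->
  (P (A `&` [set w | X t w = i /\ X u w = k]) * P [set w | X t w = i]
   = P A * P [set w | X t w = i /\ X u w = k])%E.
Proof.
move=> /andP[t_ge0 t_le_u] At A_sub; rewrite Xmarkov //.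
by congr (P _ * _)%E; apply/seteqP; split => [w []|w Aw] //; split => //; exact: A_sub.
Qed.

End markov_factorization.

Theorem lemma3 (R : realType) (d0 : measure_display) (T : measurableType d0)
  (P : probability T R) (n d : nat) (X : R -> T -> 'I_n.+1)
  (q : R -> 'I_n.+1 -> 'I_n.+1 -> R) (v : 'I_n.+1 -> 'I_d -> R) :
  A1 P X q -> A2 q ->
  forall (i k : 'I_n.+1) (eps t : R) (x : 'I_d -> R), 0 < eps -> 0 <= t ->
  (P [set w | X t w = i /\ X (t + eps)%R w = k]
     * Fv P v X i t (fun l => (x l - eps * Mv v l)%R)
   <= P [set w | X t w = i /\ X (t + eps)%R w = k /\ Lle v X (t + eps)%R w x]
        * P [set w | X t w = i])%E /\
  (P [set w | X t w = i /\ X (t + eps)%R w = k /\ Lle v X (t + eps)%R w x]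
        * P [set w | X t w = i]
   <= P [set w | X t w = i /\ X (t + eps)%R w = k]
        * Fv P v X i t (fun l => (x l - eps * mv v l)%R))%E.
Proof.
move=> [Xmeas Xreg Xmarkov _] _ i k eps t x eps_gt0 t_ge0.
have t_le_teps : t <= t + eps by rewrite lerDl ltW.
have teps_ge0 : 0 <= t + eps := le_trans t_ge0 t_le_teps.
set B := [set w | X t w = i /\ X (t + eps) w = k].
pose A y := [set w | X t w = i] `&` [set w | Lle v X t w y].
have A_past y : nat_filt X t (A y) := nat_filt_state_Lle v Xreg i y t_ge0.
have factor y : (P B * Fv P v X i t y = P (A y `&` B) * P [set w | X t w = i])%E.
  by rewrite muleC markov_past_state ?t_ge0 //; move=> w [].
have mAB y : measurable (A y `&` B).
  apply: measurableI; first exact: (nat_filt_measurable Xmeas).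
  by apply: measurableI; exact: Xmeas.
have mC : measurable [set w | X t w = i /\ X (t + eps) w = k /\ Lle v X (t + eps) w x].
  apply: measurableI; first exact: Xmeas.
  apply: measurableI; first exact: Xmeas.
  exact: (nat_filt_measurable Xmeas (nat_filt_Lle v Xreg x teps_ge0)).
have Pi_ge0 : (0 <= P [set w | X t w = i])%E by exact: measure_ge0.
split; rewrite factor; apply: lee_wpmul2r => //; apply: le_measure; rewrite ?inE //.
- by move=> w [[Xi Lw] [_ Xk]]; do 2 split => //; exact: Lle_shift_Mv.
- by move=> w [Xi [Xk Lw]]; do 2 split => //; exact: Lle_shift_mv.
Qed.
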